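(* Let $\psi\in\mathbf{\Psi}_n$, and $x:=(x_1,\ldots,x_n)\in X^n$ with $|\!|\!|x|\!|\!|_{\psi}=1$. Then $$\partial|\!|\!|\cdot|\!|\!|_\psi(x) = \Big\{(\xi_1 x^*_1,\ldots,\xi_n x^*_n)\mid x^*_i\in\partial\|\cdot\|(x_i)\ (i=1,\ldots,n),\ (\xi_1,\ldots,\xi_n)\in\partial|\!|\!|\cdot|\!|\!|_{\psi}(\nu)\Big\},$$ where $\nu:=(\|x_1\|,\ldots,\|x_n\|)\in\mathbb{R}^n$ and, in $\partial|\!|\!|\cdot|\!|\!|_{\psi}(\nu)$, $|\!|\!|\cdot|\!|\!|_\psi$ denotes the corresponding norm on $\mathbb{R}^n$.
   Context: Let $(X,\|\cdot\|)$ be a normed vector space, $n\ge2$. $\Omega_n:=\{t\in\mathbb{R}^n\mid t_i\ge0,\ \sum_i t_i=1\}$, $\Omega_n^\circ:=\{t\in\Omega_n\mid t_i<1\ \forall i\}$. $\mathbf{\Psi}_n$ is the class of convex continuous $\psi:\Omega_n\to\mathbb{R}$ with (B1) $\psi(\mathbf{e}_i)=1$ for all standard unit vectors $\mathbf{e}_i$ and (B2) $\psi(t)\ge(1-t_i)\psi\big(\frac{t_1}{1-t_i},\ldots,\frac{t_{i-1}}{1-t_i},0,\frac{t_{i+1}}{1-t_i},\ldots,\frac{t_n}{1-t_i}\big)$ for all $t\in\Omega_n^\circ$, $i=1,\ldots,n$. For $\psi\in\mathbf{\Psi}_n$, $|\!|\!|x|\!|\!|_\psi:=\big(\sum_{i}\|x_i\|\big)\,\psi\big(\frac{\|x_1\|}{\sum_{i}\|x_i\|},\ldots,\frac{\|x_n\|}{\sum_{i}\|x_i\|}\big)$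 for $x\ne0$, $|\!|\!|0|\!|\!|_\psi:=0$ (on $\mathbb{R}^n$ take $X=\mathbb{R}$ with absolute value). $\partial$ denotes the convex subdifferential; $(X^n)^*$ is identified with $(X^* )^n$. *)

From HB Require Import structures.
From mathcomp Require Import all_boot all_order all_algebra.
From mathcomp Require Import all_classical all_reals all_analysis.
Set Implicit Arguments. Unset Strict Implicit. Unset Printing Implicit Defensive.
Import Order.TTheory GRing.Theory Num.Theory.
Import numFieldNormedType.Exports.
Local Open Scope classical_set_scope.
Local Open Scope ring_scope.

Definition Omega {R : realType} (n : nat) : set 'rV[R]_n :=
  [set t | (forall i, 0 <= t 0 i) /\ \sum_(i < n) t 0 i = 1].

Definition Omega_int {R : realType} (n : nat) : set 'rV[R]_n :=
  [set t | @Omega R n t /\ forall i, t 0 i < 1].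

Definition unitv {R : realType} (n : nat) (i : 'I_n) : 'rV[R]_n :=
  \row_j (if j == i then 1 else 0).

Definition PsiClass {R : realType} (n : nat) (psi : 'rV[R]_n -> R) : Prop :=
  (forall s t, @Omega R n s -> @Omega R n t -> forall l : R, 0 <= l <= 1 ->
     psi (l *: s + (1 - l) *: t) <= l * psi s + (1 - l) * psi t) /\
  {within @Omega R n, continuous psi} /\
  (forall i, psi (@unitv R n i) = 1) /\
  (forall t, @Omega_int R n t -> forall i : 'I_n,
     psi t >= (1 - t 0 i) *
       psi (\row_j (if j == i then 0 else t 0 j / (1 - t 0 i)))).

Definition psinorm_of {R : realType} (n : nat) (psi : 'rV[R]_n -> R)
  (v : 'I_n -> R) : R :=
  let s := \sum_(i < n) v i in
  if s == 0 then 0 else s * psi (\row_i (v i / s)).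

Definition psinorm {R : realType} {X : normedModType R} (n : nat)
  (psi : 'rV[R]_n -> R) (x : 'I_n -> X) : R :=
  psinorm_of psi (fun i => `|x i|).

Definition psinormR {R : realType} (n : nat) (psi : 'rV[R]_n -> R)
  (t : 'rV[R]_n) : R :=
  psinorm_of psi (fun i => `|t 0 i|).

Definition is_dual {R : realType} {X : normedModType R} (f : X -> R) : Prop :=
  (forall (a : R) (u v : X), f (a *: u + v) = a * f u + f v) /\ continuous f.

Definition subdiff_norm {R : realType} {X : normedModType R} (x : X)
  : set (X -> R) :=
  [set f | is_dual f /\ forall y : X, f (y - x) <= `|y| - `|x|].

(* Subdifferential of |||.|||_psi on X^n at x, with (X^n)^* identified with
   (X^* )^n via <(f_i), (y_i)> = sum_i f_i y_i. *)
Definition subdiff_psinorm {R : realType} {X : normedModType R} (n : nat)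
  (psi : 'rV[R]_n -> R) (x : 'I_n -> X) : set ('I_n -> X -> R) :=
  [set F | (forall i, is_dual (F i)) /\
     forall y : 'I_n -> X,
       \sum_(i < n) F i (y i - x i) <= psinorm psi y - psinorm psi x].

(* Subdifferential of |||.|||_psi on R^n at t, with (R^n)^* identified with R^n
   via <xi, s> = sum_i xi_i s_i. *)
Definition subdiff_psinormR {R : realType} (n : nat)
  (psi : 'rV[R]_n -> R) (t : 'rV[R]_n) : set 'rV[R]_n :=
  [set xi | forall s : 'rV[R]_n,
     \sum_(i < n) xi 0 i * (s 0 i - t 0 i) <= psinormR psi s - psinormR psi t].

From HB Require Import structures.
From mathcomp Require Import all_boot all_order all_algebra.
From mathcomp Require Import all_classical all_reals all_analysis.
From mathcomp Require Import lra.
Set Implicit Arguments.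
Unset Strict Implicit.
Unset Printing Implicit Defensive.
Import Order.TTheory GRing.Theory Num.Theory.
Import numFieldNormedType.Exports.
Local Open Scope classical_set_scope.
Local Open Scope ring_scope.

(** The inclusion from right to left is a termwise estimate: if [x_i^*] norms
   [x_i] and [xi] is a subgradient of |||.|||_psi at [nu], then
   [xi_i x_i^*(y_i - x_i) <= xi_i (s_i ||y_i|| - ||x_i||)] with [s_i] the sign
   of [xi_i], and the vector [(s_i ||y_i||)_i] has psi-norm |||y|||_psi.

   Conversely, positive homogeneity turns a subgradient [F] at [x] into a
   functional with [sum_i F_i x_i = |||x|||_psi] and
   [sum_i F_i y_i <= |||y|||_psi]; by (B1) each [F_i] then has dual norm
   [c_i <= 1].  Testing [F] against almost norming unit vectors scaled by
   [mu_i >= 0] gives [sum_i c_i mu_i <= |||mu|||_psi], which forces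
   [F_i x_i = c_i ||x_i||] and makes [c] a subgradient at [nu].  Hence
   [F_i = c_i x_i^*] with [x_i^* = F_i / c_i], or with a norming functional of
   [x_i] (Hahn-Banach, by Zorn's lemma on graphs of norm-dominated partial
   linear functionals) when [c_i = 0]. *)

Section DualElements.
Variables (R : realType) (X : normedModType R) (f : X -> R).
Hypothesis hf : is_dual f.

Lemma dual0 : f 0 = 0.
Proof. by have := hf.1 1 0 0; rewrite scale1r addr0 mul1r; lra. Qed.

Lemma dualZ a u : f (a *: u) = a * f u.
Proof. by have := hf.1 a u 0; rewrite !addr0 dual0 addr0. Qed.

Lemma dualN u : f (- u) = - f u.
Proof. by rewrite -scaleN1r dualZ mulN1r. Qed.

Lemma dualB u v : f (u - v) = f u - f v.
Proof. by have := hf.1 1 u (- v); rewrite scale1r mul1r dualN. Qed.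

Lemma dual_scale c : is_dual (fun y => c * f y).
Proof.
split=> [a u v|y]; first by rewrite hf.1 mulrDr mulrCA.
by apply: continuousM; [exact: cst_continuous | exact: hf.2].
Qed.

End DualElements.

Lemma sum_dualB (R : realType) (X : normedModType R) (n : nat)
    (F : 'I_n -> X -> R) (y x : 'I_n -> X) : (forall i, is_dual (F i)) ->
  \sum_i F i (y i - x i) = \sum_i F i (y i) - \sum_i F i (x i).
Proof. by move=> hF; rewrite -sumrB; apply: eq_bigr => i _; rewrite dualB. Qed.

Lemma lipschitz1_continuous (R : realType) (X : normedModType R) (f : X -> R) :
  (forall u v, f u - f v <= `|u - v|) -> continuous f.
Proof.
move=> fL x; apply/cvgrPdist_lt => e e0; near=> y.
apply: (@le_lt_trans _ _ `|x - y|); last by near: y; exact: cvgr_dist_lt.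
by rewrite ler_norml fL andbT lerNl opprB distrC fL.
Unshelve. all: by end_near. Qed.

Lemma subdiff_normE (R : realType) (X : normedModType R) (x : X) (f : X -> R) :
  subdiff_norm x f <-> [/\ is_dual f, f x = `|x| & forall y, f y <= `|y|].
Proof.
split=> [[hf hs]|[hf fx ub]]; last first.
  by split=> // y; rewrite dualB // fx; have := ub y; lra.
have ub y : f y <= `|y|.
  by have := hs (y + x); rewrite addrK; have := ler_normD y x; lra.
split=> //; have := hs 0; rewrite sub0r dualN // normr0.
by have := ub x; lra.
Qed.

Lemma exists_unit_vector (R : realType) (X : normedModType R) (u : X) :
  u != 0 -> exists e : X, `|e| = 1.
Proof.
move=> u0; exists (`|u|^-1 *: u).
by rewrite normrZ normfV normr_id mulVf ?normr_eq0.
Qed.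

Definition dual_norm (R : realType) (X : normedModType R) (f : X -> R) : R :=
  sup [set f u | u in [set u : X | `|u| = 1]].

Section DualNorm.
Variables (R : realType) (X : normedModType R) (e : X) (f : X -> R) (M : R).
Hypotheses (e1 : `|e| = 1) (hf : is_dual f) (fM : forall y, f y <= M * `|y|).

Let has_sup_dual : has_sup [set f u | u in [set u : X | `|u| = 1]].
Proof.
split; first by exists (f e), e.
by exists M => _ [u /= u1 <-]; rewrite -[M]mulr1 -u1 fM.
Qed.

Lemma dual_norm_ub u : `|u| = 1 -> f u <= dual_norm f.
Proof. by move=> u1; apply: sup_upper_bound has_sup_dual _ _; exists u. Qed.

Lemma dual_normP y : f y <= dual_norm f * `|y|.
Proof.
have [->|y0] := eqVneq y 0; first by rewrite dual0 // normr0 mulr0.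
have ny : 0 < `|y| by rewrite normr_gt0.
have := dual_norm_ub (u := `|y|^-1 *: y).
rewrite normrZ normfV normr_id mulVf ?gt_eqF // dualZ // => /(_ erefl).
by rewrite ler_pdivrMl // mulrC.
Qed.

Lemma dual_norm_ge0 : 0 <= dual_norm f.
Proof.
have := dual_norm_ub e1; have := dual_norm_ub (u := - e).
by rewrite normrN dualN // => /(_ e1); lra.
Qed.

Lemma dual_norm_eq0 : dual_norm f = 0 -> f = fun=> 0.
Proof.
move=> f0; apply/funext => y; have := dual_normP y; have := dual_normP (- y).
by rewrite f0 !mul0r dualN //; lra.
Qed.

Lemma dual_norm_approx eps : 0 < eps ->
  exists v : X, `|v| = 1 /\ dual_norm f - eps < f v.
Proof.
move=> eps0; have [_ [v v1 <-] hv] := sup_adherent eps0 has_sup_dual.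
by exists v.
Qed.

End DualNorm.

Section PsiNorm.
Variables (R : realType) (n : nat) (psi : 'rV[R]_n -> R).

Lemma eq_psinorm_of v w : v =1 w -> psinorm_of psi v = psinorm_of psi w.
Proof. by move=> /funext ->. Qed.

Lemma psinorm_of0 : psinorm_of psi (fun=> 0) = 0.
Proof. by rewrite /psinorm_of big1 // eqxx. Qed.

Lemma psinorm_ofZ v t : 0 < t ->
  psinorm_of psi (fun i => t * v i) = t * psinorm_of psi v.
Proof.
move=> t0; rewrite /psinorm_of -mulr_sumr mulf_eq0 gt_eqF //=.
case: eqP => _; first by rewrite mulr0.
rewrite -mulrA; congr (_ * (_ * psi _)); apply/rowP => i; rewrite !mxE.
by rewrite invfM mulrACA mulfV ?gt_eqF // mul1r.
Qed.

Lemma psinorm_of_single (B1 : forall i, psi (unitv i) = 1) i y : 0 <= y ->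
  psinorm_of psi (fun j => if j == i then y else 0) = y.
Proof.
move=> y0; rewrite /psinorm_of -big_mkcond big_pred1_eq.
have [//|yn] := eqVneq y 0; rewrite -[RHS]mulr1 -(B1 i).
congr (_ * psi _); apply/rowP => j; rewrite !mxE.
by case: eqP => _; rewrite ?divff ?mul0r.
Qed.

Variable X : normedModType R.

Lemma psinorm0 : psinorm psi (fun=> 0 : X) = 0.
Proof.
rewrite /psinorm (@eq_psinorm_of _ (fun=> 0)) ?psinorm_of0 // => i.
exact: normr0.
Qed.

Lemma psinormZ (x : 'I_n -> X) t : 0 < t ->
  psinorm psi (fun i => t *: x i) = t * psinorm psi x.
Proof.
move=> t0; rewrite /psinorm -psinorm_ofZ //; apply: eq_psinorm_of => i.
by rewrite normrZ gtr0_norm.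
Qed.

Lemma psinorm_single (B1 : forall i, psi (unitv i) = 1) i (y : X) :
  psinorm psi (fun j => if j == i then y else 0) = `|y|.
Proof.
rewrite /psinorm -(psinorm_of_single B1 i (normr_ge0 y)).
by apply: eq_psinorm_of => j; case: (j == i); rewrite ?normr0.
Qed.

Lemma psinorm_neq0 (x : 'I_n -> X) : psinorm psi x != 0 -> exists i, x i != 0.
Proof.
apply: contraNP => /forallNP x0; rewrite /psinorm -psinorm_of0.
apply/eqP/eq_psinorm_of => i.
by move/negP/negbNE/eqP: (x0 i) => ->; rewrite normr0.
Qed.

Lemma psinormR_row_norm (x : 'I_n -> X) :
  psinormR psi (\row_i `|x i|) = psinorm psi x.
Proof. by apply: eq_psinorm_of => i; rewrite mxE normr_id. Qed.

End PsiNorm.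

Section NormingFunctional.
Variables (R : realType) (X : normedModType R) (x0 : X).

Definition norming_graph (G : set (X * R)) : Prop :=
  [/\ G (x0, `|x0|),
      forall a r s, G (a, r) -> G (a, s) -> r = s,
      forall l a r b s, G (a, r) -> G (b, s) -> G (l *: a + b, l * r + s)
    & forall a r, G (a, r) -> r <= `|a|].

Lemma norming_graph00 G : norming_graph G -> G (0, 0).
Proof.
case=> Gx _ Glin _; have := Glin (-1) _ _ _ _ Gx Gx.
by rewrite scaleN1r mulN1r !addNr.
Qed.

Lemma norming_graphZ G l a r : norming_graph G -> G (a, r) -> G (l *: a, l * r).
Proof.
move=> gG Gar; have [_ _ Glin _] := gG.
by have := Glin l _ _ _ _ Gar (norming_graph00 gG); rewrite !addr0.
Qed.

Lemma norming_graph_line :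
  norming_graph [set p | exists t : R, p = (t *: x0, t * `|x0|)].
Proof.
split.
- by exists 1; rewrite scale1r mul1r.
- move=> a r s [t [-> ->]] [t' [E ->]].
  have [->|x00] := eqVneq x0 0; first by rewrite normr0 !mulr0.
  have /eqP : (t - t') *: x0 = 0 by rewrite scalerBl E subrr.
  by rewrite scaler_eq0 subr_eq0 (negbTE x00) orbF => /eqP ->.
- move=> l a r b s [t [-> ->]] [t' [-> ->]].
  by exists (l * t + t'); rewrite scalerDl scalerA mulrDl mulrA.
- move=> a r [t [-> ->]].
  by rewrite normrZ ler_wpM2r // real_ler_norm // num_real.
Qed.

(* The empty graph is admitted so that the union of the empty chain is too. *)
Lemma norming_graph_bigcup (F : set (set (X * R))) :
    F `<=` [set G | G = set0 \/ norming_graph G] -> total_on F subset ->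
  \bigcup_(G in F) G = set0 \/ norming_graph (\bigcup_(G in F) G).
Proof.
move=> FP Ftot; set U := \bigcup_(G in F) G.
have graphF G p : F G -> G p -> norming_graph G.
  by move=> FG Gp; case: (FP G FG) => // G0; rewrite G0 in Gp.
have common G1 G2 p q : F G1 -> F G2 -> G1 p -> G2 q ->
    exists2 G, F G & G p /\ G q.
  move=> F1 F2 h1 h2; case: (Ftot _ _ F1 F2) => sub.
    by exists G2 => //; split => //; apply: sub.
  by exists G1 => //; split => //; apply: sub.
have [[p [G FG Gp]]|U0] := pselect (exists p, U p); last first.
  by left; apply/seteqP; split => p // Up; apply: U0; exists p.
have [Gx _ _ _] := graphF _ _ FG Gp.
right; split; first by exists G.
- move=> a r s [G1 F1 h1] [G2 F2 h2].
  have [G' F' [h1' h2']] := common _ _ _ _ F1 F2 h1 h2.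
  by have [_ Gfun _ _] := graphF _ _ F' h1'; apply: Gfun h1' h2'.
- move=> l a r b s [G1 F1 h1] [G2 F2 h2].
  have [G' F' [h1' h2']] := common _ _ _ _ F1 F2 h1 h2.
  by have [_ _ Glin _] := graphF _ _ F' h1'; exists G' => //; apply: Glin.
- move=> a r [G1 F1 h1].
  by have [_ _ _ Gdom] := graphF _ _ F1 h1; apply: Gdom.
Qed.

Section Extension.
Variables (A : set (X * R)) (z : X).
Hypotheses (gA : norming_graph A) (zA : ~ exists r, A (z, r)).

Lemma extension_constant : exists c,
  (forall a r, A (a, r) -> r - `|a - z| <= c) /\
  (forall b s, A (b, s) -> c <= `|b + z| - s).
Proof.
have [_ _ Alin Adom] := gA; have A00 := norming_graph00 gA.
pose S := [set w | exists a r, A (a, r) /\ w = r - `|a - z|].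
have ubS b s : A (b, s) -> ubound S (`|b + z| - s).
  move=> Abs _ [a [r [Aar ->]]].
  have := Adom _ _ (Alin 1 _ _ _ _ Aar Abs); rewrite scale1r mul1r.
  have : `|a + b| <= `|a - z| + `|b + z|.
    by rewrite -[a + b]addr0 -(addNr z) addrACA ler_normD.
  lra.
have S0 : S !=set0 by exists (0 - `|0 - z|), 0, 0.
have hasS : has_sup S by split=> //; exists (`|0 + z| - 0); exact: ubS.
exists (sup S); split => [a r Aar|b s Abs]; last exact: ge_sup S0 (ubS _ _ Abs).
by apply: sup_upper_bound hasS _ _; exists a, r.
Qed.

Definition graph_extension (c : R) : set (X * R) :=
  [set p | exists a r t, A (a, r) /\ p = (a + t *: z, r + t * c)].

Variable c : R.
Hypotheses (cge : forall a r, A (a, r) -> r - `|a - z| <= c)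
  (cle : forall b s, A (b, s) -> c <= `|b + z| - s).

(* For [t <> 0], rescale by [|t|^-1] and use the bound on [c] of that sign. *)
Lemma graph_extension_dominated a r t :
  A (a, r) -> r + t * c <= `|a + t *: z|.
Proof.
move=> Aar; have [_ _ _ Adom] := gA.
have [tn|tp|->] := ltgtP t 0; last by rewrite scale0r mul0r !addr0; exact: Adom.
- have u0 : 0 < - t by rewrite oppr_gt0.
  have := cge (norming_graphZ (- t)^-1 gA Aar).
  rewrite -(ler_pM2l u0) mulrBr mulrA mulfV ?gt_eqF // mul1r.
  rewrite -[X in X * `|_|](gtr0_norm u0) -normrZ scalerBr scalerA.
  by rewrite mulfV ?gt_eqF // scale1r scaleNr opprK; lra.
- have := cle (norming_graphZ t^-1 gA Aar).
  rewrite -(ler_pM2l tp) mulrBr mulrA mulfV ?gt_eqF // mul1r.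
  rewrite -[X in X * `|_|](gtr0_norm tp) -normrZ scalerDr scalerA.
  by rewrite mulfV ?gt_eqF // scale1r; lra.
Qed.

Lemma norming_graph_extension : norming_graph (graph_extension c).
Proof.
have [Ax Afun Alin _] := gA.
split.
- by exists x0, `|x0|, 0; rewrite scale0r mul0r !addr0.
- move=> a r s [a1 [r1 [t1 [A1 [-> ->]]]]] [a2 [r2 [t2 [A2 [Ea ->]]]]].
  have [e|ne] := eqVneq t1 t2.
    move: Ea; rewrite e => /addIr ea; rewrite ea in A1.
    by rewrite (Afun _ _ _ A1 A2).
  exfalso; apply: zA; exists ((t1 - t2)^-1 * (- r1 + r2)).
  have ez : (t1 - t2) *: z = - a1 + a2.
    by apply: (addrI a1); rewrite addrA subrr add0r scalerBl addrA Ea addrK.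
  have := norming_graphZ (t1 - t2)^-1 gA (Alin (-1) _ _ _ _ A1 A2).
  by rewrite scaleN1r mulN1r -ez scalerA mulVf ?subr_eq0 // scale1r.
- move=> l a r b s [a1 [r1 [t1 [A1 [-> ->]]]]] [a2 [r2 [t2 [A2 [-> ->]]]]].
  exists (l *: a1 + a2), (l * r1 + r2), (l * t1 + t2); split; first exact: Alin.
  congr pair; first by rewrite scalerDr scalerA scalerDl addrACA.
  by rewrite mulrDr mulrA mulrDl addrACA.
- by move=> a r [a1 [r1 [t [A1 [-> ->]]]]]; exact: graph_extension_dominated.
Qed.

Lemma graph_extension_proper : A `<` graph_extension c.
Proof.
split; first by move=> [a r] Aar; exists a, r, 0; rewrite scale0r mul0r !addr0.
move/(_ (z, c)) => h; apply: zA; exists c; apply: h.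
exists 0, 0, 1; rewrite scale1r mul1r !add0r; split => //.
exact: norming_graph00.
Qed.

End Extension.

Lemma maximal_norming_graph_total A : norming_graph A ->
    (forall B, A `<` B -> ~ (B = set0 \/ norming_graph B)) ->
  forall z, exists r, A (z, r).
Proof.
move=> gA maxA z; apply: contrapT => zA.
have [c [cge cle]] := extension_constant z gA.
apply: (maxA _ (graph_extension_proper gA zA c)); right.
exact: norming_graph_extension.
Qed.

Lemma total_norming_graph_dual A : norming_graph A ->
  (forall z, exists r, A (z, r)) -> exists f, subdiff_norm x0 f.
Proof.
move=> [Ax Afun Alin Adom] /choice [f Af].
have fL u v : f u - f v <= `|u - v|.
  have := Alin (-1) _ _ _ _ (Af v) (Af u).
  by rewrite scaleN1r mulN1r addrC [- _ + _]addrC; apply: Adom.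
exists f; apply/subdiff_normE; split.
- split; last exact: lipschitz1_continuous.
  by move=> a u v; apply: Afun (Af _) _; exact: Alin.
- exact: Afun (Af _) Ax.
- by move=> y; apply: Adom.
Qed.

Theorem subdiff_norm_nonempty : exists f, subdiff_norm x0 f.
Proof.
have [A [[A0|gA] maxA]] := Zorn_bigcup norming_graph_bigcup.
  exfalso; apply: (maxA _ _ (or_intror norming_graph_line)).
  rewrite A0; split; first exact: sub0set.
  by move/(_ (x0, `|x0|)); apply; exists 1; rewrite scale1r mul1r.
exact: total_norming_graph_dual gA (maximal_norming_graph_total gA maxA).
Qed.

End NormingFunctional.

Section SubgradientPsiNorm.
Variables (R : realType) (X : normedModType R) (n : nat) (psi : 'rV[R]_n -> R).

Lemma subdiff_psinorm_of_factors (x : 'I_n -> X) (xs : 'I_n -> X -> R)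
    (xi : 'rV[R]_n) :
  (forall i, subdiff_norm (x i) (xs i)) ->
  subdiff_psinormR psi (\row_i `|x i|) xi ->
  subdiff_psinorm psi x (fun i y => xi 0 i * xs i y).
Proof.
move=> hxs hxi; split=> [i|y].
  by apply: dual_scale; have [] := (subdiff_normE _ _).1 (hxs i).
pose s := \row_i (if 0 <= xi 0 i then `|y i| else - `|y i|).
have -> : psinorm psi y = psinormR psi s.
  apply: eq_psinorm_of => i.
  by rewrite mxE; case: ifP; rewrite ?normrN normr_id.
rewrite -psinormR_row_norm; apply: le_trans (hxi s); apply: ler_sum => i _.
have [hd xsx xsle] := (subdiff_normE _ _).1 (hxs i).
have xsge : - `|y i| <= xs i (y i).
  by have := xsle (- y i); rewrite dualN // normrN; lra.
have := xsle (y i); rewrite dualB // xsx !mxE; case: ifP => [xi0|/negbT].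
  by rewrite ler_wpM2l // lerD2r.
by rewrite -ltNge => /ltW; nra.
Qed.

Variables (x : 'I_n -> X) (F : 'I_n -> X -> R).
Hypothesis hF : subdiff_psinorm psi x F.

Lemma subdiff_psinorm_pairing : \sum_i F i (x i) = psinorm psi x.
Proof.
have [hd hsub] := hF.
have := hsub (fun=> 0); rewrite sum_dualB // psinorm0.
rewrite big1 => [|i _]; last exact: dual0.
have := hsub (fun i => 2 *: x i); rewrite sum_dualB // psinormZ //.
by rewrite (eq_bigr _ (fun i _ => dualZ (hd i) _ _)) -mulr_sumr; lra.
Qed.

Lemma subdiff_psinorm_le y : \sum_i F i (y i) <= psinorm psi y.
Proof.
have := hF.2 y; rewrite sum_dualB; last exact: hF.1.
by rewrite subdiff_psinorm_pairing; lra.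
Qed.

Hypothesis B1 : forall i, psi (unitv i) = 1.

Lemma subdiff_psinorm_component_le i y : F i y <= `|y|.
Proof.
have := subdiff_psinorm_le (fun j => if j == i then y else 0).
rewrite psinorm_single // (bigD1 i) //= eqxx big1 ?addr0 // => j /negbTE ->.
exact: dual0 (hF.1 j).
Qed.

Variable e : X.
Hypothesis e1 : `|e| = 1.

Let c i := dual_norm (F i).

Let component_bound i y : F i y <= 1 * `|y|.
Proof. by rewrite mul1r subdiff_psinorm_component_le. Qed.

Let c_ub i y : F i y <= c i * `|y|.
Proof. exact: dual_normP e1 (hF.1 i) (component_bound i) y. Qed.

Lemma dual_norms_le_psinorm_of (mu : 'I_n -> R) : (forall i, 0 <= mu i) ->
  \sum_i c i * mu i <= psinorm_of psi mu.
Proof.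
move=> mu0; apply/ler_addgt0Pr => eps eps0.
pose K := \sum_i mu i + 1.
have K0 : 0 < K by rewrite ltr_wpDl // sumr_ge0.
have /choice [v hv] : forall i, exists v : X,
    `|v| = 1 /\ c i - eps / K < F i v.
  move=> i.
  have [v vP] := dual_norm_approx e1 (component_bound i) (divr_gt0 eps0 K0).
  by exists v.
have := subdiff_psinorm_le (fun i => mu i *: v i).
rewrite /psinorm (@eq_psinorm_of _ _ _ _ mu) => [|i]; last first.
  by rewrite normrZ (hv i).1 mulr1 ger0_norm.
have : \sum_i (c i * mu i - eps / K * mu i) <= \sum_i F i (mu i *: v i).
  apply: ler_sum => i _; rewrite (dualZ (hF.1 i)) -mulrBl mulrC.
  by rewrite ler_wpM2l // ltW // (hv i).2.
have : eps / K * \sum_i mu i <= eps.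
  by rewrite mulrAC ler_pdivrMr // ler_pM2l // lerDl ler01.
rewrite sumrB -mulr_sumr; lra.
Qed.

Lemma subdiff_psinorm_component_eq i : F i (x i) = c i * `|x i|.
Proof.
have gap j : true -> 0 <= c j * `|x j| - F j (x j) by rewrite subr_ge0 c_ub.
suff sum0 : \sum_j (c j * `|x j| - F j (x j)) = 0.
  by have := psumr_eq0P gap sum0 (i := i) isT; lra.
apply/eqP; rewrite eq_le sumr_ge0 // andbT sumrB subdiff_psinorm_pairing.
by rewrite subr_le0 dual_norms_le_psinorm_of.
Qed.

Lemma dual_norms_subdiff :
  subdiff_psinormR psi (\row_i `|x i|) (\row_i c i).
Proof.
move=> s; rewrite psinormR_row_norm -subdiff_psinorm_pairing.
rewrite (eq_bigr (fun i => c i * s 0 i - c i * `|x i|)) => [|i _]; last first.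
  by rewrite !mxE mulrBr.
rewrite sumrB (eq_bigr _ (fun i _ => subdiff_psinorm_component_eq i)) lerD2r.
apply: le_trans (dual_norms_le_psinorm_of (fun i => normr_ge0 (s 0 i))).
apply: ler_sum => i _; rewrite ler_wpM2l ?real_ler_norm ?num_real //.
exact: dual_norm_ge0 e1 (hF.1 i) (component_bound i).
Qed.

Lemma subdiff_psinorm_factor : exists xs : 'I_n -> X -> R,
  (forall i, subdiff_norm (x i) (xs i)) /\
  F = (fun i y => (\row_i c i) 0 i * xs i y).
Proof.
have [hb hbP] := choice (fun u : X => subdiff_norm_nonempty u).
exists (fun i => if c i == 0 then hb (x i) else fun y => (c i)^-1 * F i y).
split=> [i|]; last first.
  apply/funext => i; apply/funext => y; rewrite mxE.
  have [c0|c0] := eqVneq (c i) 0; last by rewrite mulVKf.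
  by rewrite (dual_norm_eq0 e1 (hF.1 i) (component_bound i) c0) c0 mul0r.
have [_|c0] := eqVneq (c i) 0; first exact: hbP.
have cp : 0 < c i.
  by rewrite lt_def c0 (dual_norm_ge0 e1 (hF.1 i) (component_bound i)).
apply/subdiff_normE; split; first by apply: dual_scale; exact: hF.1.
  by rewrite subdiff_psinorm_component_eq mulKf.
by move=> y; rewrite ler_pdivrMl // c_ub.
Qed.

End SubgradientPsiNorm.

Theorem theorem4p3 (R : realType) (X : normedModType R) (n : nat)
  (hn : (2 <= n)%N) (psi : 'rV[R]_n -> R) (hpsi : PsiClass psi)
  (x : 'I_n -> X) (hx : psinorm psi x = 1) :
  subdiff_psinorm psi x =
  [set F | exists (xs : 'I_n -> X -> R) (xi : 'rV[R]_n),
     (forall i, subdiff_norm (x i) (xs i)) /\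
     subdiff_psinormR psi (\row_i `|x i|) xi /\
     F = (fun i (y : X) => xi 0 i * xs i y)].
Proof.
have [_ [_ [B1 _]]] := hpsi.
have [e e1] : exists e : X, `|e| = 1.
  have [i xi0] : exists i, x i != 0.
    by apply: (@psinorm_neq0 _ _ psi); rewrite hx oner_neq0.
  exact: exists_unit_vector xi0.
apply/seteqP; split=> [F hF|_ [xs [xi [hxs [hxi ->]]]]].
  have [xs [hxs defF]] := subdiff_psinorm_factor hF B1 e1.
  exists xs, (\row_i dual_norm (F i)); do 2!split=> //.
  exact (dual_norms_subdiff hF B1 e1).
exact: subdiff_psinorm_of_factors hxs hxi.
Qed.
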